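(* For integers $N\ge1$ and $n\ge2$ let $$\Sigma_2(n,N)=\sum_{(k,r,s)\in B_{m}\setminus B_{N\sqrt n}}\binom{2n}{n+\frac12krs}\binom{2n}{n+\frac14\left(kr^2+ks^2+(-1)^{\frac{k+1}{2}}\right)},\qquad m=5\sqrt{n\log n}.$$ Then $$\lim_{N\to\infty}\limsup_{n\to\infty}\frac{\Sigma_2(n,N)}{16^n\log n/\sqrt n}=0.$$
   Context: For real $t>0$, $B_t$ is the set of triples $(k,r,s)\in\mathbf Z^3$ with $k>0$ odd, $r>s>0$, $\gcd(r,s)=1$, $r\not\equiv s\pmod 2$, and $k(r^2+s^2)\le t$. Convention: $\binom{a}{b}=0$ if $b>a$. *)

From Stdlib Require Import Reals ZArith List Lra Lia.
From Coquelicot Require Import Coquelicot.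
Import ListNotations.
Open Scope R_scope.

Definition binomZ (a b : Z) : R :=
  if (Z.leb 0 b && Z.leb b a)%bool then Binomial.C (Z.to_nat a) (Z.to_nat b) else 0.

Definition inB (t : R) (k r s : Z) : bool :=
  (Z.ltb 0 k && Z.odd k && Z.ltb 0 s && Z.ltb s r && Z.eqb (Z.gcd r s) 1
   && negb (Bool.eqb (Z.odd r) (Z.odd s))
   && (if Rle_dec (IZR (k * (r ^ 2 + s ^ 2))) t then true else false))%bool.

Definition Zrange (M : nat) : list Z := map Z.of_nat (seq 0 (S M)).

Definition mbound (n : nat) : R := 5 * sqrt (INR n * ln (INR n)).

(* Every (k,r,s) in B_t has 0 <= k,r,s <= t < up t, so summing over
   the cube [0, up t]^3 with the membership filter sums over all of B_m. *)
Definition Sigma2 (n N : nat) : R :=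
  let m := mbound n in
  let M := Z.to_nat (up m) in
  fold_right Rplus 0
    (map (fun '(k, (r, s)) =>
            binomZ (2 * Z.of_nat n) (Z.of_nat n + (k * r * s) / 2)
            * binomZ (2 * Z.of_nat n)
                (Z.of_nat n + (k * r ^ 2 + k * s ^ 2 + (-1) ^ ((k + 1) / 2)) / 4))
       (filter (fun '(k, (r, s)) =>
                  (inB m k r s && negb (inB (INR N * sqrt (INR n)) k r s))%bool)
          (list_prod (Zrange M) (list_prod (Zrange M) (Zrange M))))).

(* Both binomials are controlled by the central one: for 0 <= j <= n,
   C(2n, n+j) (2n + j^2) <= 2n C(2n, n), and C(2n, n)^2 (3n + 1) <= 16^n.
   The second binomial sits at offset about U/4 with U = k(r^2 + s^2), so every
   summand is O(16^n / U^2) <= O(16^n / (k^2 r^4)).  Summing over s <= r gives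
   O(16^n / (k^2 r^3)); over the r with 2 k r^2 > U > N sqrt n, telescoping
   against 1/(2(r - 1/2)^2) gives O(16^n / (k N sqrt n)); over k <= m <= 6n the
   harmonic sum gives O(16^n log n / (N sqrt n)).  Hence the normalised sum is
   at most 3440 / N for all n >= 3, and its lim sup tends to 0 with 1/N. *)

From Stdlib Require Import Reals ZArith List Lra Lia.
From Coquelicot Require Import Coquelicot.
Open Scope R_scope.

Lemma C_nonneg a k : 0 <= Binomial.C a k.
Proof.
  apply Rdiv_le_0_compat; [apply pos_INR|].
  apply Rmult_lt_0_compat; apply INR_fact_lt_0.
Qed.

Lemma C_central_succ n :
  Binomial.C (2 * S n) (S n) * INR (S n) = 2 * INR (2 * n + 1) * Binomial.C (2 * n) n.
Proof.
  unfold Binomial.C.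
  replace (2 * S n - S n)%nat with (S n) by lia.
  replace (2 * n - n)%nat with n by lia.
  replace (2 * S n)%nat with (S (S (2 * n))) by lia.
  rewrite !fact_simpl, !mult_INR.
  pose proof (INR_fact_neq_0 n).
  assert (INR (S n) <> 0) by (apply not_0_INR; lia).
  rewrite !S_INR, !mult_INR, !plus_INR in *. simpl. rewrite !plus_INR. simpl.
  field. split; assumption.
Qed.

Lemma C_central_sq_le n : Binomial.C (2 * n) n ^ 2 * (3 * INR n + 1) <= 16 ^ n.
Proof.
  induction n as [|n IHn].
  - unfold Binomial.C. simpl. lra.
  - pose proof (C_central_succ n) as E.
    set (c := Binomial.C (2 * n) n) in *.
    set (d := Binomial.C (2 * S n) (S n)) in *.
    assert (Hc : 0 <= c) by apply C_nonneg.
    assert (Hn : 0 <= INR n) by apply pos_INR.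
    rewrite S_INR in E |- *. rewrite plus_INR, mult_INR in E. simpl in E.
    assert (Hd : d * (INR n + 1) = 2 * (2 * INR n + 1) * c) by lra.
    (* the ratio of consecutive bounds is (2n+1)^2 (3n+4) / (4 (n+1)^2 (3n+1)) <= 1 *)
    assert (K : (2 * INR n + 1) ^ 2 * (3 * INR n + 4)
                <= 4 * (INR n + 1) ^ 2 * (3 * INR n + 1)) by nra.
    assert (Hsq : (d * (INR n + 1)) ^ 2 * (3 * (INR n + 1) + 1)
                  <= 16 * (INR n + 1) ^ 2 * (c ^ 2 * (3 * INR n + 1))).
    { rewrite Hd. assert (0 <= c ^ 2) by nra. nra. }
    assert (Hpos : 0 < (INR n + 1) ^ 2) by nra.
    simpl pow in IHn |- *.
    apply (Rmult_le_reg_r ((INR n + 1) ^ 2)); [exact Hpos|].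
    simpl pow in Hsq. nra.
Qed.

Lemma C_shift_le n j : (j <= n)%nat ->
  Binomial.C (2 * n) (n + j) * (2 * INR n + INR j ^ 2) <= 2 * INR n * Binomial.C (2 * n) n.
Proof.
  induction j as [|j IHj]; intro Hj.
  - rewrite Nat.add_0_r. simpl. lra.
  - rewrite Nat.add_succ_r, pascal_step3 by lia.
    specialize (IHj ltac:(lia)).
    set (x := Binomial.C (2 * n) (n + j)) in *.
    assert (Hx : 0 <= x) by apply C_nonneg.
    replace (2 * n - (n + j))%nat with (n - j)%nat by lia.
    rewrite minus_INR, !S_INR, plus_INR by lia.
    assert (0 <= INR j) by apply pos_INR.
    assert (INR j + 1 <= INR n) by (rewrite <- S_INR; apply le_INR; lia).
    assert (P : (INR n - INR j) * (2 * INR n + (INR j + 1) ^ 2)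
                <= (INR n + INR j + 1) * (2 * INR n + INR j ^ 2)) by nra.
    replace ((INR n - INR j) / (INR n + INR j + 1) * x * (2 * INR n + (INR j + 1) ^ 2))
      with (x * ((INR n - INR j) * (2 * INR n + (INR j + 1) ^ 2)) / (INR n + INR j + 1))
      by (field; lra).
    apply Rle_trans with (x * (2 * INR n + INR j ^ 2)); [|exact IHj].
    apply (Rmult_le_reg_r (INR n + INR j + 1)); [lra|].
    unfold Rdiv. rewrite Rmult_assoc, Rinv_l, Rmult_1_r by lra. nra.
Qed.

Lemma binomZ_nonneg a b : 0 <= binomZ a b.
Proof. unfold binomZ. destruct (_ && _)%bool; [apply C_nonneg | lra]. Qed.

Lemma binomZ_shift_le n (j : Z) : (0 <= j)%Z ->
  binomZ (2 * Z.of_nat n) (Z.of_nat n + j) * (2 * INR n + IZR j ^ 2)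
  <= 2 * INR n * Binomial.C (2 * n) n.
Proof.
  intro Hj. unfold binomZ.
  assert (0 <= Binomial.C (2 * n) n) by apply C_nonneg.
  assert (0 <= INR n) by apply pos_INR.
  destruct ((0 <=? Z.of_nat n + j)%Z && (Z.of_nat n + j <=? 2 * Z.of_nat n)%Z)%bool eqn:E.
  - apply andb_prop in E as [_ E]. apply Z.leb_le in E.
    replace j with (Z.of_nat (Z.to_nat j)) by lia.
    replace (Z.to_nat (2 * Z.of_nat n)) with (2 * n)%nat by lia.
    replace (Z.to_nat (Z.of_nat n + Z.of_nat (Z.to_nat j))) with (n + Z.to_nat j)%nat by lia.
    rewrite <- INR_IZR_INZ. apply C_shift_le. lia.
  - nra.
Qed.

Lemma binomZ_shift_le_central n (j : Z) : (1 <= n)%nat -> (0 <= j)%Z ->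
  binomZ (2 * Z.of_nat n) (Z.of_nat n + j) <= Binomial.C (2 * n) n.
Proof.
  intros Hn Hj. pose proof (binomZ_shift_le n j Hj).
  pose proof (binomZ_nonneg (2 * Z.of_nat n) (Z.of_nat n + j)).
  assert (1 <= INR n) by (apply (le_INR 1); lia).
  assert (0 <= IZR j ^ 2) by (apply pow_le; apply IZR_le; lia).
  nra.
Qed.

Definition summand (n : nat) (k r s : Z) : R :=
  binomZ (2 * Z.of_nat n) (Z.of_nat n + (k * r * s) / 2)
  * binomZ (2 * Z.of_nat n)
      (Z.of_nat n + (k * r ^ 2 + k * s ^ 2 + (-1) ^ ((k + 1) / 2)) / 4).

Lemma product_le_inv_sq (n b1 b2 c J U P : R) :
  1 <= n -> 0 <= b1 -> 0 <= b2 -> b1 <= c ->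
  b2 * (2 * n + J ^ 2) <= 2 * n * c -> 8 <= U <= 8 * J ->
  c ^ 2 * (3 * n + 1) <= P ->
  b1 * b2 <= 43 * P / U ^ 2.
Proof.
  intros Hn Hb1 Hb2 Hc HJ [HU HUJ] HP.
  assert (H1 : b2 * J ^ 2 <= 2 * n * c) by nra.
  assert (HUJ2 : U ^ 2 <= 64 * J ^ 2) by nra.
  assert (H2 : b2 * U ^ 2 <= 128 * n * c) by nra.
  assert (0 <= c) by lra.
  (* 43 >= 128 / 3 *)
  assert (H3 : b1 * (b2 * U ^ 2) <= c * (128 * n * c))
    by (apply Rmult_le_compat; nra).
  assert (0 < U ^ 2) by nra.
  apply (Rmult_le_reg_r (U ^ 2)); [assumption|].
  replace (43 * P / U ^ 2 * U ^ 2) with (43 * P) by (field; lra).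
  nra.
Qed.

Lemma neg1_pow_ge (p : Z) : (-1 <= (-1) ^ p)%Z.
Proof.
  destruct (Z.lt_ge_cases p 0).
  - rewrite Z.pow_neg_r; lia.
  - assert (Z.abs ((-1) ^ p) = 1)%Z by (rewrite Z.abs_pow; apply Z.pow_1_l; lia).
    lia.
Qed.

Lemma summand_le_inv_sq n (k r s : Z) : (1 <= n)%nat -> (0 < k)%Z -> (0 < s)%Z -> (s < r)%Z ->
  8 <= IZR (k * (r ^ 2 + s ^ 2)) ->
  summand n k r s <= 43 * 16 ^ n / IZR (k * (r ^ 2 + s ^ 2)) ^ 2.
Proof.
  intros Hn Hk Hs Hr HU. unfold summand.
  (* the second binomial is taken at offset j = floor((U +- 1) / 4) >= U / 4 - 1 *)
  set (U := (k * (r ^ 2 + s ^ 2))%Z) in *.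
  set (x := (k * r ^ 2 + k * s ^ 2 + (-1) ^ ((k + 1) / 2))%Z).
  assert (Hx : (U - 1 <= x)%Z) by (pose proof (neg1_pow_ge ((k + 1) / 2)); unfold x, U; nia).
  set (j := (x / 4)%Z).
  assert (Hj : (x - 3 <= 4 * j)%Z)
    by (pose proof (Z.div_mod x 4); pose proof (Z.mod_pos_bound x 4); unfold j; lia).
  assert (HJ : IZR U - 4 <= 4 * IZR j).
  { rewrite <- (mult_IZR 4), <- (minus_IZR U 4). apply IZR_le. lia. }
  assert (Hj0 : (0 <= j)%Z) by (apply le_IZR; lra).
  assert (Hi : (0 <= k * r * s / 2)%Z) by (apply Z.div_pos; [nia | lia]).
  apply product_le_inv_sq with (n := INR n) (c := Binomial.C (2 * n) n) (J := IZR j).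
  - apply (le_INR 1); lia.
  - apply binomZ_nonneg.
  - apply binomZ_nonneg.
  - apply binomZ_shift_le_central; assumption.
  - apply binomZ_shift_le; assumption.
  - lra.
  - apply C_central_sq_le.
Qed.

Definition lsum {A} (l : list A) (f : A -> R) : R := fold_right Rplus 0 (map f l).

Lemma lsum_app {A} (l1 l2 : list A) f : lsum (l1 ++ l2) f = lsum l1 f + lsum l2 f.
Proof. unfold lsum. induction l1 as [|a l1 IH]; simpl; [lra | rewrite IH; lra]. Qed.

Lemma lsum_map {A B} (h : A -> B) l f : lsum (map h l) f = lsum l (fun x => f (h x)).
Proof. unfold lsum. rewrite map_map. reflexivity. Qed.

Lemma lsum_ext {A} (l : list A) f g : (forall x, f x = g x) -> lsum l f = lsum l g.
Proof. intro H. unfold lsum. f_equal. apply map_ext, H. Qed.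

Lemma lsum_le_in {A} (l : list A) f g :
  (forall x, In x l -> f x <= g x) -> lsum l f <= lsum l g.
Proof.
  unfold lsum. induction l as [|a l IH]; intro H; simpl; [lra|].
  pose proof (H a (in_eq a l)). pose proof (IH (fun x Hx => H x (in_cons a x l Hx))). lra.
Qed.

Lemma lsum_scal {A} (l : list A) c f : lsum l (fun x => c * f x) = c * lsum l f.
Proof. unfold lsum. induction l as [|a l IH]; simpl; [ring | rewrite IH; ring]. Qed.

Lemma lsum_le_scal {A} (l : list A) c f g : 0 <= c ->
  (forall x, f x <= c * g x) -> lsum l f <= c * lsum l g.
Proof.
  intros Hc H. rewrite <- lsum_scal. apply lsum_le_in. intros x _. apply H.
Qed.

Lemma lsum_nonneg {A} (l : list A) f : (forall x, 0 <= f x) -> 0 <= lsum l f.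
Proof.
  unfold lsum. intro H. induction l as [|a l IH]; simpl; [lra|].
  pose proof (H a). lra.
Qed.

Lemma lsum_filter {A} (l : list A) p f :
  lsum (filter p l) f = lsum l (fun x => if p x then f x else 0).
Proof. unfold lsum. induction l as [|a l IH]; simpl; auto. destruct (p a); simpl; lra. Qed.

Lemma lsum_prod {A B} (l1 : list A) (l2 : list B) f :
  lsum (list_prod l1 l2) f = lsum l1 (fun a => lsum l2 (fun b => f (a, b))).
Proof.
  induction l1 as [|a l1 IH]; [reflexivity|].
  simpl list_prod. rewrite lsum_app, lsum_map, IH. reflexivity.
Qed.

Lemma lsum_Zcube (M : nat) (f : Z * (Z * Z) -> R) :
  lsum (list_prod (Zrange M) (list_prod (Zrange M) (Zrange M))) f
  = lsum (seq 0 (S M)) (fun k => lsum (seq 0 (S M)) (fun r => lsum (seq 0 (S M))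
      (fun s => f (Z.of_nat k, (Z.of_nat r, Z.of_nat s))))).
Proof.
  unfold Zrange. rewrite lsum_prod, lsum_map. apply lsum_ext. intro k.
  rewrite lsum_prod, lsum_map. apply lsum_ext. intro r.
  rewrite lsum_map. reflexivity.
Qed.

Lemma Rinv_nonneg x : 0 <= x -> 0 <= / x.
Proof.
  intros [Hx | <-]; [left; apply Rinv_0_lt_compat, Hx | rewrite Rinv_0; lra].
Qed.

Lemma lsum_indicator_le (r L a : nat) (c : R) : 0 <= c ->
  lsum (seq a L) (fun s => if (s <=? r)%nat then c else 0) <= INR (S r - a) * c.
Proof.
  intro Hc. revert a. induction L as [|L IH]; intro a; unfold lsum in *; cbn [seq map fold_right].
  - apply Rmult_le_pos; [apply pos_INR | exact Hc].
  - specialize (IH (S a)). destruct (a <=? r)%nat eqn:E.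
    + apply Nat.leb_le in E. replace (S r - a)%nat with (S (S r - S a)) by lia.
      rewrite S_INR. lra.
    + apply Nat.leb_gt in E. replace (S r - S a)%nat with 0%nat in IH by lia.
      replace (S r - a)%nat with 0%nat by lia. lra.
Qed.

Definition cube_tail (X : R) (r : nat) : R :=
  if Rlt_dec X (2 * INR r ^ 2) then / INR r ^ 3 else 0.

Lemma cube_tail_nonneg X r : 0 <= cube_tail X r.
Proof.
  unfold cube_tail. destruct Rlt_dec; [|lra].
  apply Rinv_nonneg, pow_le, pos_INR.
Qed.

Lemma inv_cube_telescope x : 1 <= x ->
  / x ^ 3 + / (2 * (x + /2) ^ 2) <= / (2 * (x - /2) ^ 2).
Proof.
  intro H.
  assert (Ha : 0 < (x - /2) ^ 2) by (apply pow_lt; lra).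
  assert (Hb : 0 < (x + /2) ^ 2) by (apply pow_lt; lra).
  assert (Hc : 0 < x ^ 3) by (apply pow_lt; lra).
  assert (K : 2 * (x - /2) ^ 2 * (x + /2) ^ 2 * 2 <= 2 * x ^ 3 * ((x + /2) ^ 2 - (x - /2) ^ 2)).
  { replace ((x + /2) ^ 2 - (x - /2) ^ 2) with (2 * x) by field.
    replace ((x - /2) ^ 2 * (x + /2) ^ 2) with ((x ^ 2 - /4) ^ 2) by field.
    nra. }
  set (a := (x - /2) ^ 2) in *. set (b := (x + /2) ^ 2) in *. set (c := x ^ 3) in *.
  apply (Rmult_le_reg_r (2 * a * b * c)); [repeat apply Rmult_lt_0_compat; lra|].
  replace ((/ c + / (2 * b)) * (2 * a * b * c)) with (2 * a * b + a * c) by (field; lra).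
  replace (/ (2 * a) * (2 * a * b * c)) with (b * c) by (field; lra).
  lra.
Qed.

Lemma cube_tail_sum_from X : 0 < X -> forall L r, (1 <= r)%nat ->
  lsum (seq r L) (cube_tail X)
  <= if Rlt_dec X (2 * INR r ^ 2) then / (2 * (INR r - /2) ^ 2) else 8 / X.
Proof.
  intros HX L. induction L as [|L IH]; intros r Hr.
  - assert (1 <= INR r) by (apply (le_INR 1); lia).
    unfold lsum; simpl. destruct Rlt_dec.
    + apply Rinv_nonneg. nra.
    + apply Rdiv_le_0_compat; lra.
  - specialize (IH (S r) ltac:(lia)).
    assert (1 <= INR r) by (apply (le_INR 1); lia).
    unfold lsum in IH |- *. simpl seq. cbn [map fold_right].
    rewrite S_INR in IH. unfold cube_tail at 1.
    replace (INR r + 1 - /2) with (INR r + /2) in IH by field.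
    destruct (Rlt_dec X (2 * INR r ^ 2)).
    + destruct (Rlt_dec X (2 * (INR r + 1) ^ 2)); [|exfalso; nra].
      pose proof (inv_cube_telescope (INR r) H). lra.
    + destruct (Rlt_dec X (2 * (INR r + 1) ^ 2)); [|lra].
      (* here X < 2 (r+1)^2 <= 8 (r + 1/2)^2 *)
      assert (/ (2 * (INR r + /2) ^ 2) <= 8 / X).
      { unfold Rdiv. rewrite <- (Rinv_inv 8), <- Rinv_mult.
        apply Rinv_le_contravar; [apply Rmult_lt_0_compat; lra | nra]. }
      lra.
Qed.

Lemma cube_tail_sum X L : 0 < X -> lsum (seq 0 L) (cube_tail X) <= 8 / X.
Proof.
  intro HX. destruct L as [|L].
  - apply Rdiv_le_0_compat; lra.
  - assert (H0 : cube_tail X 0 = 0)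
      by (unfold cube_tail; destruct Rlt_dec; [simpl; rewrite Rmult_0_l, Rinv_0|]; reflexivity).
    pose proof (cube_tail_sum_from X HX L 1 (le_n 1)) as H.
    unfold lsum in H |- *. simpl seq. cbn [map fold_right]. rewrite H0, Rplus_0_l.
    simpl INR in H. destruct Rlt_dec; [|exact H].
    apply Rle_trans with (/ (2 * (1 - /2) ^ 2)); [exact H|].
    apply Rle_trans with (8 / 2); [lra|].
    apply Rmult_le_compat_l; [lra|]. apply Rinv_le_contravar; lra.
Qed.


Lemma harmonic_le M : (1 <= M)%nat -> lsum (seq 1 M) (fun k => / INR k) <= 1 + ln (INR M).
Proof.
  induction M as [|M IH]; intro H; [lia|].
  destruct M as [|M].
  - unfold lsum. simpl. rewrite ln_1. lra.
  - specialize (IH ltac:(lia)).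
    rewrite seq_S, lsum_app. unfold lsum at 2. cbn [map fold_right].
    replace (1 + S M)%nat with (S (S M)) by lia.
    rewrite (S_INR (S M)).
    set (x := INR (S M)) in *.
    assert (1 <= x) by (apply (le_INR 1); lia).
    assert (ln x - ln (x + 1) <= - / (x + 1)).
    { replace (ln x - ln (x + 1)) with (ln (x / (x + 1)))
        by (unfold Rdiv; rewrite ln_mult, ln_Rinv by (try apply Rinv_0_lt_compat; lra); ring).
      pose proof (exp_ineq1_le (ln (x / (x + 1)))) as E.
      rewrite exp_ln in E by (apply Rdiv_lt_0_compat; lra).
      replace (- / (x + 1)) with (x / (x + 1) - 1) by (field; lra). lra. }
    lra.
Qed.

(* Since [/ 0 = 0], the weight vanishes for [k = 0] or [r = 0]. *)
Definition weight (A : R) (k r s : nat) : R :=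
  if (s <=? r)%nat then cube_tail (A / INR k) r / (INR k ^ 2 * INR r) else 0.

Lemma weight_nonneg A k r s : 0 <= weight A k r s.
Proof.
  unfold weight. destruct (s <=? r)%nat; [|lra].
  apply Rmult_le_pos; [apply cube_tail_nonneg|].
  apply Rinv_nonneg, Rmult_le_pos; [apply pow_le|]; apply pos_INR.
Qed.

Lemma weight_sum_s A k r L :
  lsum (seq 0 L) (weight A k r) <= 2 / INR k ^ 2 * cube_tail (A / INR k) r.
Proof.
  set (t := cube_tail (A / INR k) r).
  assert (Ht : 0 <= t) by apply cube_tail_nonneg.
  assert (Hw : 0 <= t / (INR k ^ 2 * INR r)) by apply (weight_nonneg A k r 0).
  eapply Rle_trans; [apply (lsum_indicator_le r L 0 _ Hw)|].
  rewrite Nat.sub_0_r, S_INR.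
  destruct k as [|k].
  { change (INR 0) with 0. rewrite pow_i by lia.
    rewrite Rmult_0_l, !Rdiv_0_r, Rmult_0_r, Rmult_0_l. lra. }
  assert (Hk : 0 < INR (S k)) by (apply lt_0_INR; lia).
  assert (0 < INR (S k) ^ 2) by (apply pow_lt, Hk).
  destruct r as [|r].
  { change (INR 0) with 0. rewrite Rmult_0_r, Rdiv_0_r, Rmult_0_r.
    apply Rmult_le_pos; [apply Rdiv_le_0_compat|]; lra. }
  assert (Hr : 1 <= INR (S r)) by (apply (le_INR 1); lia).
  replace (2 / INR (S k) ^ 2 * t) with (2 * INR (S r) * (t / (INR (S k) ^ 2 * INR (S r))))
    by (field; lra).
  apply Rmult_le_compat_r; lra.
Qed.

Lemma weight_sum_rs A k L : 0 < A ->
  lsum (seq 0 L) (fun r => lsum (seq 0 L) (weight A k r)) <= 16 / (INR k * A).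
Proof.
  intro HA.
  destruct k as [|k].
  { change (INR 0) with 0. rewrite Rmult_0_l, Rdiv_0_r.
    apply Rle_trans with (0 * lsum (seq 0 L) (cube_tail (A / 0))); [|lra].
    apply lsum_le_scal; [lra|]. intro r.
    eapply Rle_trans; [apply weight_sum_s|].
    change (INR 0) with 0. rewrite pow_i, Rdiv_0_r by lia. lra. }
  assert (Hk : 0 < INR (S k)) by (apply lt_0_INR; lia).
  apply Rle_trans with (2 / INR (S k) ^ 2 * lsum (seq 0 L) (cube_tail (A / INR (S k)))).
  { apply lsum_le_scal; [|intro r; apply weight_sum_s].
    apply Rdiv_le_0_compat; [lra | apply pow_lt, Hk]. }
  apply Rle_trans with (2 / INR (S k) ^ 2 * (8 / (A / INR (S k)))).
  - apply Rmult_le_compat_l; [apply Rdiv_le_0_compat; [lra | apply pow_lt, Hk]|].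
    apply cube_tail_sum, Rdiv_lt_0_compat; assumption.
  - right. field. lra.
Qed.

Lemma weight_sum A M : 0 < A -> (1 <= M)%nat ->
  lsum (seq 0 (S M)) (fun k => lsum (seq 0 (S M)) (fun r => lsum (seq 0 (S M)) (weight A k r)))
  <= 16 / A * (1 + ln (INR M)).
Proof.
  intros HA HM.
  apply Rle_trans with (16 / A * lsum (seq 0 (S M)) (fun k => / INR k)).
  { apply lsum_le_scal; [apply Rdiv_le_0_compat; lra|]. intro k.
    eapply Rle_trans; [apply weight_sum_rs, HA|].
    right. destruct k as [|k].
    - change (INR 0) with 0. rewrite Rmult_0_l, Rdiv_0_r, Rinv_0. ring.
    - assert (INR (S k) <> 0) by (apply not_0_INR; lia).
      field. split; [assumption | lra]. }
  apply Rmult_le_compat_l; [apply Rdiv_le_0_compat; lra|].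
  unfold lsum at 1. cbn [seq map fold_right]. change (INR 0) with 0. rewrite Rinv_0, Rplus_0_l.
  apply harmonic_le, HM.
Qed.

Lemma inB_shell t1 t2 k r s : inB t1 k r s = true -> inB t2 k r s = false ->
  (0 < k)%Z /\ (0 < s)%Z /\ (s < r)%Z /\ t2 < IZR (k * (r ^ 2 + s ^ 2)).
Proof.
  unfold inB. intros H1 H2.
  repeat rewrite Bool.andb_true_iff in H1.
  destruct H1 as [[[[[[Hk Hodd] Hs] Hr] Hgcd] Hpar] _].
  rewrite Hk, Hodd, Hs, Hr, Hgcd, Hpar in H2. cbn [andb negb] in H2.
  destruct (Rle_dec (IZR (k * (r ^ 2 + s ^ 2))) t2); [discriminate|].
  apply Z.ltb_lt in Hk, Hs, Hr. repeat split; auto. lra.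
Qed.

Lemma shell_summand_le_weight n m A (k r s : nat) : (1 <= n)%nat -> 8 <= A ->
  (if (inB m (Z.of_nat k) (Z.of_nat r) (Z.of_nat s)
       && negb (inB A (Z.of_nat k) (Z.of_nat r) (Z.of_nat s)))%bool
   then summand n (Z.of_nat k) (Z.of_nat r) (Z.of_nat s) else 0)
  <= 43 * 16 ^ n * weight A k r s.
Proof.
  intros Hn HA.
  assert (Hw : 0 <= 43 * 16 ^ n * weight A k r s).
  { apply Rmult_le_pos; [apply Rmult_le_pos; [lra | apply pow_le; lra] | apply weight_nonneg]. }
  destruct (inB m _ _ _) eqn:E1; [|exact Hw].
  destruct (inB A _ _ _) eqn:E2; [exact Hw|]. cbn [andb negb].
  destruct (inB_shell _ _ _ _ _ E1 E2) as [Hk [Hs [Hr HU]]].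
  assert (EU : IZR (Z.of_nat k * (Z.of_nat r ^ 2 + Z.of_nat s ^ 2))
               = INR k * (INR r ^ 2 + INR s ^ 2)).
  { rewrite !Z.pow_2_r, mult_IZR, plus_IZR, !mult_IZR, <- !INR_IZR_INZ. ring. }
  rewrite EU in HU.
  eapply Rle_trans; [apply summand_le_inv_sq; try assumption; lra|]. rewrite EU.
  assert (1 <= INR k) by (apply (le_INR 1); lia).
  assert (1 <= INR s) by (apply (le_INR 1); lia).
  assert (INR s <= INR r) by (apply le_INR; lia).
  unfold weight, cube_tail.
  replace (s <=? r)%nat with true by (symmetry; apply Nat.leb_le; lia).
  destruct Rlt_dec as [_|Hnot].
  2:{ exfalso. apply Hnot. apply (Rmult_lt_reg_l (INR k)); [lra|].
      replace (INR k * (A / INR k)) with A by (field; lra).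
      assert (INR k * INR s ^ 2 <= INR k * INR r ^ 2)
        by (apply Rmult_le_compat_l; [lra | apply pow_incr; lra]).
      lra. }
  (* U = k (r^2 + s^2) >= k r^2, so 1 / U^2 <= 1 / (k^2 r^4) *)
  replace (/ INR r ^ 3 / (INR k ^ 2 * INR r)) with (/ (INR k * INR r ^ 2) ^ 2)
    by (field; lra).
  unfold Rdiv. apply Rmult_le_compat_l; [apply Rmult_le_pos; [lra | apply pow_le; lra]|].
  apply Rinv_le_contravar; [apply pow_lt; nra|].
  apply pow_incr. nra.
Qed.

Lemma Sigma2_le n N : (1 <= n)%nat -> 8 <= INR N * sqrt (INR n) ->
  (1 <= Z.to_nat (up (mbound n)))%nat ->
  Sigma2 n N <= 43 * 16 ^ n * (16 / (INR N * sqrt (INR n))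
                               * (1 + ln (INR (Z.to_nat (up (mbound n)))))).
Proof.
  intros Hn HA HM.
  unfold Sigma2. cbv zeta.
  change (fold_right Rplus 0 (map ?f ?l)) with (lsum l f).
  rewrite lsum_filter, lsum_Zcube.
  eapply Rle_trans; [|apply Rmult_le_compat_l; [|apply weight_sum; [nra | exact HM]]].
  2:{ apply Rmult_le_pos; [lra | apply pow_le; lra]. }
  apply lsum_le_scal; [apply Rmult_le_pos; [lra | apply pow_le; lra]|]. intro k.
  apply lsum_le_scal; [apply Rmult_le_pos; [lra | apply pow_le; lra]|]. intro r.
  apply lsum_le_scal; [apply Rmult_le_pos; [lra | apply pow_le; lra]|]. intro s.
  apply shell_summand_le_weight; assumption.
Qed.

Lemma Sigma2_nonneg n N : 0 <= Sigma2 n N.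
Proof.
  unfold Sigma2. cbv zeta. change (fold_right Rplus 0 (map ?f ?l)) with (lsum l f).
  apply lsum_nonneg. intros [k [r s]]. apply Rmult_le_pos; apply binomZ_nonneg.
Qed.

Lemma up_mbound_range n : (1 <= n)%nat ->
  (1 <= Z.to_nat (up (mbound n)))%nat /\ INR (Z.to_nat (up (mbound n))) <= 6 * INR n.
Proof.
  intro Hn.
  assert (H1 : 1 <= INR n) by (apply (le_INR 1); lia).
  assert (Hl0 : 0 <= ln (INR n)) by (rewrite <- ln_1; apply ln_le; lra).
  assert (Hl : ln (INR n) <= INR n).
  { pose proof (exp_ineq1_le (ln (INR n))) as E. rewrite exp_ln in E by lra. lra. }
  assert (Hs : sqrt (INR n * ln (INR n)) <= INR n).
  { apply Rle_trans with (sqrt (INR n * INR n)); [apply sqrt_le_1_alt; nra|].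
    rewrite sqrt_square; lra. }
  pose proof (sqrt_pos (INR n * ln (INR n))).
  unfold mbound. destruct (archimed (5 * sqrt (INR n * ln (INR n)))) as [Ha Hb].
  assert (Hup : (0 < up (5 * sqrt (INR n * ln (INR n))))%Z) by (apply lt_IZR; lra).
  rewrite (INR_IZR_INZ (Z.to_nat _)), Z2Nat.id by lia. split; [lia | lra].
Qed.

Lemma Sigma2_ratio_bounds n N : (3 <= n)%nat -> 8 <= INR N ->
  0 <= Sigma2 n N / (16 ^ n * ln (INR n) / sqrt (INR n)) <= 3440 / INR N.
Proof.
  intros Hn HN.
  assert (H3 : 3 <= INR n) by (pose proof (le_INR 3 n ltac:(lia)) as T; simpl in T; lra).
  assert (HL : 1 <= ln (INR n)).
  { rewrite <- (ln_exp 1). apply ln_le; [apply exp_pos|]. pose proof exp_le_3. lra. }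
  assert (Hq : 1 <= sqrt (INR n)) by (rewrite <- sqrt_1; apply sqrt_le_1_alt; lra).
  destruct (up_mbound_range n ltac:(lia)) as [HM1 HM2].
  set (M := Z.to_nat (up (mbound n))) in *.
  assert (HlnM : 1 + ln (INR M) <= 5 * ln (INR n)).
  { assert (0 < INR M) by (apply lt_0_INR; lia).
    assert (ln (INR M) <= ln 6 + ln (INR n)) by (rewrite <- ln_mult by lra; apply ln_le; lra).
    assert (ln 6 <= 3 * ln (INR n)).
    { replace (3 * ln (INR n)) with (ln (INR n * INR n * INR n)) by (rewrite !ln_mult by nra; ring).
      apply ln_le; nra. }
    lra. }
  assert (HA : 8 <= INR N * sqrt (INR n)) by nra.
  pose proof (Sigma2_le n N ltac:(lia) HA HM1) as HS. fold M in HS.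
  pose proof (Sigma2_nonneg n N) as HS0.
  assert (H16 : 0 < 16 ^ n) by (apply pow_lt; lra).
  set (L := ln (INR n)) in *. set (q := sqrt (INR n)) in *.
  assert (HD : 0 < 16 ^ n * L / q) by (apply Rdiv_lt_0_compat; nra).
  split; [apply Rdiv_le_0_compat; assumption|].
  apply (Rmult_le_reg_r (16 ^ n * L / q)); [exact HD|].
  unfold Rdiv at 1. rewrite Rmult_assoc, Rinv_l, Rmult_1_r by lra.
  eapply Rle_trans; [exact HS|].
  replace (3440 / INR N * (16 ^ n * L / q))
    with (43 * 16 ^ n * (16 / (INR N * q) * (5 * L))) by (field; lra).
  apply Rmult_le_compat_l; [nra|].
  apply Rmult_le_compat_l; [apply Rdiv_le_0_compat; nra | exact HlnM].
Qed.

Lemma Rbar_abs_LimSup_le (u : nat -> R) (B : R) :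
  (exists n0, forall n, (n0 <= n)%nat -> 0 <= u n <= B) ->
  Rbar_le (Rbar_abs (LimSup_seq u)) B.
Proof.
  intros [n0 Hu].
  assert (Hlo : Rbar_le 0 (LimSup_seq u)).
  { rewrite <- (LimSup_seq_const 0). apply LimSup_le. exists n0. apply Hu. }
  rewrite Rbar_abs_pos by exact Hlo.
  rewrite <- (LimSup_seq_const B). apply LimSup_le. exists n0. apply Hu.
Qed.

Theorem lemma4p1 :
  forall eps : R, 0 < eps ->
  exists N0 : nat, forall N : nat, (1 <= N)%nat -> (N0 <= N)%nat ->
    Rbar_lt
      (Rbar_abs (LimSup_seq (fun n : nat =>
         Sigma2 n N / (16 ^ n * ln (INR n) / sqrt (INR n)))))
      (Finite eps).
Proof.
  intros eps Heps.
  destruct (archimed (3440 / eps)) as [Harch _].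
  assert (Hpos : 0 < 3440 / eps) by (apply Rdiv_lt_0_compat; lra).
  exists (Nat.max 8 (Z.to_nat (up (3440 / eps)))).
  intros N _ HN.
  assert (HN8 : 8 <= INR N) by (pose proof (le_INR 8 N ltac:(lia)) as T; simpl in T; lra).
  assert (HNe : 3440 / eps < INR N).
  { apply Rlt_le_trans with (IZR (up (3440 / eps))); [exact Harch|].
    rewrite <- (Z2Nat.id (up (3440 / eps))) by (apply le_IZR; lra).
    rewrite <- INR_IZR_INZ. apply le_INR. lia. }
  assert (Hb : 3440 / INR N < eps).
  { apply (Rmult_lt_reg_r (INR N / eps)); [apply Rdiv_lt_0_compat; lra|].
    replace (3440 / INR N * (INR N / eps)) with (3440 / eps) by (field; lra).
    replace (eps * (INR N / eps)) with (INR N) by (field; lra). exact HNe. }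
  apply Rbar_le_lt_trans with (Finite (3440 / INR N)); [|exact Hb].
  apply Rbar_abs_LimSup_le. exists 3%nat. intros n Hn.
  apply Sigma2_ratio_bounds; assumption.
Qed.
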